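(* Let $k\ge 2$, $n=2^k$, and let $P$ be an isothetic drawing of the Horton set of $n$ points, with tree $T$, first level $T_1$ and slab $R$ as defined in the context. Then no two of the lines defined by the vertices of $T_1$ intersect inside $R$. Consequently, inside $R$ these lines are totally ordered from bottom to top, and this bottom-to-top order coincides with the left-to-right order of the corresponding vertices of $T_1$ in $T$.
   Context: For a finite set $S$ of points in the plane with pairwise distinct $x$-coordinates, list its points in increasing order of $x$-coordinate as $p_0,\dots,p_{|S|-1}$ and set $S_{\mathrm{even}}=\{p_0,p_2,\dots\}$, $S_{\mathrm{odd}}=\{p_1,p_3,\dots\}$. For point sets $X,Y$, $X$ is high above $Y$ if every line through two points of $X$ lies strictly above every point of $Y$ and every line through two points of $Y$ lies strictly below every point of $X$. A Horton set of $2^k$ points is defined recursively: a set $H$ of $2^k$ points, no three collinear, with pairwise distinct $x$-coordinates, such that for $k=0$ it is a single point and for $k\ge1$ both $H_{\mathrm{even}}$ and $H_{\mathrm{odd}}$ are Horton sets of $2^{k-1}$ points and $H_{\mathrm{odd}}$ is high above $H_{\mathrm{even}}$. An isothetic drawing of the Horton set of $n=2^k$ points is a Horton set of $n$ points all of whose points have integer coordinates. Let $P$ be such a set, with points $p_0,\dots,p_{n-1}$ sorted by $x$-coordinate. The tree $T$ is the complete rooted binary tree with root $P$ in which every vertex $Q$ with at least two points has left child $Q_{\mathrm{even}}$ and right child $Q_{\mathrm{odd}}$ (taken with respect to the $x$-order of $Q$). The left-to-right order of vertices of a given level of $T$ is their order in the standard planar drawing of $T$ in which each left child is placed before its sibling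 right child. For $0\le i\le k$, the $i$-th level $T_i$ is the set of vertices of $T$ consisting of exactly $2^i$ points. Each vertex of $T_1$ is a pair of points, and the line through them is called the line defined by that vertex. $R$ is the closed vertical slab bounded by the vertical lines through $p_{n/4}$ and $p_{3n/4-1}$. *)

From HB Require Import structures.
From mathcomp Require Import all_boot all_order all_algebra.
Set Implicit Arguments. Unset Strict Implicit. Unset Printing Implicit Defensive.
Import Order.TTheory GRing.Theory Num.Theory.

Definition pt := (int * int)%type.
Definition pt0 : pt := (0%R, 0%R).

(* S_even / S_odd for a sequence listed in increasing x-order. *)
Fixpoint evens (s : seq pt) : seq pt :=
  if s is a :: t then a :: odds t else [::]
with odds (s : seq pt) : seq pt :=
  if s is _ :: t then evens t else [::].

Local Open Scope ring_scope.

Definition line_at {F : numFieldType} (a b : pt) (x : F) : F :=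
  a.2%:~R + (b.2 - a.2)%:~R * (x - a.1%:~R) / (b.1 - a.1)%:~R.

Definition collinear (a b c : pt) : bool :=
  (b.1 - a.1) * (c.2 - a.2) == (c.1 - a.1) * (b.2 - a.2).

Definition no_three_collinear (s : seq pt) : bool :=
  [forall i : 'I_(size s), forall j : 'I_(size s), forall l : 'I_(size s),
     [&& i != j, j != l & i != l] ==>
     ~~ collinear (nth pt0 s i) (nth pt0 s j) (nth pt0 s l)].

Definition high_above (X Y : seq pt) : bool :=
  all (fun a => all (fun b => (a.1 < b.1) ==>
        all (fun y => (y.2%:~R : rat) < line_at a b (y.1%:~R : rat)) Y) X) X
  && all (fun a => all (fun b => (a.1 < b.1) ==>
        all (fun x => line_at a b (x.1%:~R : rat) < (x.2%:~R : rat)) X) Y) Y.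

Fixpoint horton_rec (k : nat) (s : seq pt) : bool :=
  match k with
  | 0 => size s == 1%N
  | k'.+1 => [&& size s == (2 ^ k'.+1)%N, horton_rec k' (evens s),
                horton_rec k' (odds s) & high_above (odds s) (evens s)]
  end.

(* P (listed as p_0, ..., p_{n-1} in strictly increasing x-order; hence
   pairwise distinct x-coordinates) is an isothetic drawing of the Horton set
   of 2^k points. *)
Definition isothetic_horton (k : nat) (P : seq pt) : bool :=
  [&& sorted (fun a b : pt => a.1 < b.1) P, no_three_collinear P & horton_rec k P].

(* vertices of level T_{k-i} ... : level i from the root, left-to-right order *)
Fixpoint tree_level (i : nat) (P : seq pt) : seq (seq pt) :=
  match i with
  | 0 => [:: P]
  | i'.+1 => flatten [seq [:: evens q; odds q] | q <- tree_level i' P]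
  end.

Definition pair_line {F : numFieldType} (q : seq pt) (x : F) : F :=
  line_at (nth pt0 q 0) (nth pt0 q 1) x.

Definition in_slab {F : numFieldType} (k : nat) (P : seq pt) (x : F) : bool :=
  ((nth pt0 P (2 ^ k %/ 4)%N).1%:~R <= x)
  && (x <= (nth pt0 P ((3 * 2 ^ k) %/ 4 - 1)%N).1%:~R).

From mathcomp Require Import all_boot all_order all_algebra zify ring lra.
Set Implicit Arguments. Unset Strict Implicit. Unset Printing Implicit Defensive.
Import Order.TTheory GRing.Theory Num.Theory.

(* Read indices of points in binary.  The vertex of T at depth m containing p_i
   consists of the points whose index is congruent to i modulo 2^m; its right
   child (bit m set) lies high above its left child (bit m clear).  The vertex at
   position t of T_1 is the pair {p_r, p_(r+n/2)} where r is t with its bits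
   reversed, so for vertices t < t' the lowest bit in which r and r' differ is
   clear in r and set in r'.  Hence the pair of r lies below the line of r' and
   the pair of r' above the line of r: the difference of the two lines, an affine
   function of x, is positive at the abscissae of all four points.  It stays
   positive on R because there is also such a point of index at most n/4 and one
   of index at least 3n/4 - 1; when the four endpoints do not provide them, the
   bit of weight n/4 of r' (resp. r) yields one. *)

Lemma nth_evens_odds (s : seq pt) i :
  nth pt0 (evens s) i = nth pt0 s i.*2 /\ nth pt0 (odds s) i = nth pt0 s i.*2.+1.
Proof.
elim: s i => [|x t IH] i; first by rewrite !nth_nil.
split; last by rewrite /= (IH i).1.
by case: i => [|i] //=; rewrite (IH i).2.
Qed.

Lemma nth_evens (s : seq pt) i : nth pt0 (evens s) i = nth pt0 s i.*2.
Proof. exact: (nth_evens_odds s i).1. Qed.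

Lemma nth_odds (s : seq pt) i : nth pt0 (odds s) i = nth pt0 s i.*2.+1.
Proof. exact: (nth_evens_odds s i).2. Qed.

Lemma size_evens_odds (s : seq pt) :
  size (evens s) = uphalf (size s) /\ size (odds s) = (size s)./2.
Proof. by elim: s => [|x t [IH1 IH2]] //=; rewrite IH1 IH2. Qed.

Lemma mem_nth_evens_odds (s : seq pt) i : i < size s ->
  nth pt0 s i \in (if odd i then odds else evens) s.
Proof.
have [sz_e sz_o] := size_evens_odds s.
have := odd_double_half (size s); have := odd_double_half i.
case: (odd i) => /= ei es lti; rewrite -ei ?add1n ?add0n -?nth_odds -?nth_evens.
all: apply: mem_nth; rewrite ?sz_e ?sz_o; case: (odd (size s)) es => /= es; lia.
Qed.

Fixpoint tree_node (m c : nat) (s : seq pt) : seq pt :=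
  if m is m'.+1 then tree_node m' c./2 (if odd c then odds s else evens s) else s.

Lemma nth_tree_node m c s i : c < 2 ^ m ->
  nth pt0 (tree_node m c s) i = nth pt0 s (c + 2 ^ m * i).
Proof.
elim: m c s => [|m IH] c s /=; first by rewrite expn0 mul1n ltnS leqn0 => /eqP ->.
rewrite expnS -{1}(odd_double_half c) => c_lt.
rewrite IH; last by move: c_lt; case: (odd c); rewrite /= -!mul2n; lia.
have := odd_double_half c.
by case: (odd c) => /= c_eq; rewrite (nth_odds, nth_evens); congr nth; lia.
Qed.

Lemma nth_tree_node_mod m s p :
  nth pt0 s p = nth pt0 (tree_node m (p %% 2 ^ m) s) (p %/ 2 ^ m).
Proof. by rewrite nth_tree_node ?ltn_pmod ?expn_gt0 // mulnC addnC -divn_eq. Qed.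

Lemma size_horton_rec K s : horton_rec K s -> size s = 2 ^ K.
Proof. by case: K => [/eqP|K /and4P [/eqP]]. Qed.

Lemma horton_rec_tree_node K m c s : m <= K -> horton_rec K s ->
  horton_rec (K - m) (tree_node m c s).
Proof.
elim: m K c s => [|m IH] [|K] c s //= m_le.
by case/and4P => _ h_e h_o _; rewrite subSS; case: (odd c); apply: IH.
Qed.

(* [in_child m c b p]: the index p lies in the right (b = true) or left child of
   the depth-m vertex of T made of the indices congruent to c modulo 2^m. *)
Definition in_child (m c : nat) (b : bool) (p : nat) : bool :=
  (p %% 2 ^ m == c) && (odd (p %/ 2 ^ m) == b).

Lemma in_childS m c b (b0 : bool) x :
  in_child m.+1 (b0 + c.*2) b (b0 + x.*2) = in_child m c b x.
Proof.
have pos := expn_gt0 2 m.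
have modE : (b0 + x.*2) %% 2 ^ m.+1 = b0 + (x %% 2 ^ m).*2.
  rewrite -!mul2n muln_modr -expnS -modnDmr modn_small //.
  rewrite expnS -muln_modr; have := ltn_pmod x pos; case: b0; lia.
have divE : (b0 + x.*2) %/ 2 ^ m.+1 = x %/ 2 ^ m.
  by rewrite expnS divnMA divn2 half_bit_double.
by rewrite /in_child modE divE eqn_add2l (inj_eq (can_inj doubleK)).
Qed.

Lemma in_child_addn_pow2 m n c b p : m < n ->
  in_child m c b (p + 2 ^ n) = in_child m c b p.
Proof.
move=> lt_mn; have pos := expn_gt0 2 m.
rewrite -(subnK (ltnW lt_mn)) expnD /in_child addnC modnMDl divnMDl // oddD oddX.
by rewrite subn_eq0 leqNgt lt_mn.
Qed.

Lemma in_child_addn_pow2_self m c b p :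
  in_child m c b (p + 2 ^ m) = in_child m c (~~ b) p.
Proof.
rewrite /in_child modnDr divnDr // divnn expn_gt0 addn1 /=.
by case: b; case: (odd (p %/ 2 ^ m)).
Qed.

Lemma in_child_small m c : c < 2 ^ m -> in_child m c false c.
Proof. by move=> c_lt; rewrite /in_child modn_small ?divn_small ?eqxx. Qed.

Fixpoint bitrev (j t : nat) : nat :=
  if j is j'.+1 then
    if t < 2 ^ j' then (bitrev j' t).*2 else (bitrev j' (t - 2 ^ j')).*2.+1
  else 0.

Lemma bitrev_lt j t : t < 2 ^ j -> bitrev j t < 2 ^ j.
Proof.
elim: j t => [|j IH] t //=; rewrite expnS => t_lt.
by case: ifP => t_small; [have := IH t | have := IH (t - 2 ^ j)]; lia.
Qed.

Lemma bitrev_split j i i' : i < i' -> i' < 2 ^ j ->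
  exists m c, [/\ m < j, in_child m c false (bitrev j i)
                & in_child m c true (bitrev j i')].
Proof.
elim: j i i' => [|j IH] i i' lt_ii'; first by rewrite expn0; lia.
rewrite expnS /= => i'_lt.
case: ifP => i_small; case: ifP => i'_small.
- have [m [c [m_lt hi hi']]] := IH i i' lt_ii' i'_small.
  rewrite -(in_childS _ _ _ false) in hi; rewrite -(in_childS _ _ _ false) in hi'.
  by exists m.+1, (false + c.*2); split.
- exists 0, 0; split=> //.
    by rewrite /in_child expn0 modn1 divn1 odd_double.
  by rewrite /in_child expn0 modn1 divn1 /= odd_double.
- clear IH; lia.
- have lt_sub : i - 2 ^ j < i' - 2 ^ j < 2 ^ j by clear IH; lia.
  have [m [c [m_lt hi hi']]] := IH _ _ (proj1 (andP lt_sub)) (proj2 (andP lt_sub)).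
  rewrite -(in_childS _ _ _ true) in hi; rewrite -(in_childS _ _ _ true) in hi'.
  by exists m.+1, (true + c.*2); split.
Qed.

Lemma tree_level_succ j s :
  tree_level j.+1 s = tree_level j (evens s) ++ tree_level j (odds s).
Proof.
elim: j s => [|j IH] s //=.
by rewrite -/(tree_level j.+1 s) IH map_cat flatten_cat.
Qed.

Lemma size_tree_level j s : size (tree_level j s) = 2 ^ j.
Proof.
elim: j s => [|j IH] s //.
by rewrite tree_level_succ size_cat !IH expnS mul2n addnn.
Qed.

Lemma nth_tree_level j s t : t < 2 ^ j ->
  nth [::] (tree_level j s) t = tree_node j (bitrev j t) s.
Proof.
elim: j s t => [|j IH] s t; first by rewrite expn0 ltnS leqn0 => /eqP ->.
rewrite tree_level_succ nth_cat size_tree_level expnS /= => t_lt.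
case: ifP => t_small; rewrite IH; try lia; set b := bitrev _ _.
  by rewrite odd_double doubleK.
by rewrite /= odd_double uphalf_double.
Qed.

Local Open Scope ring_scope.

Notation x_sorted := (sorted (fun a b : pt => a.1 < b.1)).

Lemma x_sorted_nth_lt (s : seq pt) p q : x_sorted s ->
  (p < q)%N -> (q < size s)%N -> (nth pt0 s p).1 < (nth pt0 s q).1.
Proof.
move=> s_sorted lt_pq lt_q; have lt_trans_x : transitive (fun a b : pt => a.1 < b.1).
  by move=> y x z; apply: lt_trans.
by apply: (sorted_ltn_nth lt_trans_x pt0 s_sorted); rewrite ?inE // (ltn_trans lt_pq).
Qed.

Lemma x_sorted_nth_le (F : realFieldType) (s : seq pt) p q : x_sorted s ->
  (p <= q)%N -> (q < size s)%N -> ((nth pt0 s p).1%:~R : F) <= (nth pt0 s q).1%:~R.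
Proof.
move=> s_sorted; rewrite leq_eqVlt ler_int => /predU1P [-> //|lt_pq lt_q].
exact/ltW/x_sorted_nth_lt.
Qed.

Lemma line_at_gtE (F : realFieldType) (a b z : pt) : a.1 < b.1 ->
  ((z.2%:~R : F) < line_at a b z.1%:~R) =
  ((z.2 - a.2) * (b.1 - a.1) < (b.2 - a.2) * (z.1 - a.1)).
Proof.
move=> lt_ab; have pos : (0 : F) < (b.1 - a.1)%:~R by rewrite ltr0z subr_gt0.
by rewrite /line_at -ltrBlDl -!intrB -intrM ltr_pdivlMr // -intrM ltr_int.
Qed.

Lemma line_at_ltE (F : realFieldType) (a b z : pt) : a.1 < b.1 ->
  (line_at a b (z.1%:~R : F) < z.2%:~R) =
  ((b.2 - a.2) * (z.1 - a.1) < (z.2 - a.2) * (b.1 - a.1)).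
Proof.
move=> lt_ab; have pos : (0 : F) < (b.1 - a.1)%:~R by rewrite ltr0z subr_gt0.
by rewrite /line_at -ltrBrDl -!intrB -intrM ltr_pdivrMr // -intrM ltr_int.
Qed.

Definition line_slope {F : numFieldType} (a b : pt) : F :=
  (b.2 - a.2)%:~R / (b.1 - a.1)%:~R.

Lemma line_at_slope (F : numFieldType) (a b : pt) (y z : F) :
  line_at a b y - line_at a b z = line_slope a b * (y - z).
Proof. rewrite /line_at /line_slope; ring. Qed.

Lemma line_at_fst (F : realFieldType) (a b : pt) : line_at a b (a.1%:~R : F) = a.2%:~R.
Proof. by rewrite /line_at subrr mulr0 mul0r addr0. Qed.

Lemma line_at_snd (F : realFieldType) (a b : pt) : a.1 < b.1 ->
  line_at a b (b.1%:~R : F) = b.2%:~R.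
Proof.
move=> lt_ab; have nz : ((b.1 - a.1)%:~R : F) != 0 by rewrite intr_eq0 subr_eq0 gt_eqF.
rewrite /line_at -intrB -mulrA mulfV // mulr1 intrB; ring.
Qed.

Lemma horton_child_mem K s m c b p : horton_rec K s -> (m < K)%N ->
  (p < 2 ^ K)%N -> in_child m c b p ->
  nth pt0 s p \in (if b then odds else evens) (tree_node m c s).
Proof.
move=> hs lt_mK lt_p /andP [/eqP <- /eqP <-].
rewrite (nth_tree_node_mod m); apply: mem_nth_evens_odds.
rewrite (size_horton_rec (horton_rec_tree_node _ (ltnW lt_mK) hs)).
by rewrite ltn_divLR ?expn_gt0 // -expnD subnK // ltnW.
Qed.

Lemma horton_child_high_above K s m c : horton_rec K s -> (m < K)%N ->
  high_above (odds (tree_node m c s)) (evens (tree_node m c s)).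
Proof.
move=> hs lt_mK; have := horton_rec_tree_node c (ltnW lt_mK) hs.
by rewrite -subnSK //= => /and4P [].
Qed.

Lemma horton_below_line {F : realFieldType} K s m c p q z :
  x_sorted s -> horton_rec K s -> (m < K)%N -> (p < q)%N -> (q < 2 ^ K)%N ->
  (z < 2 ^ K)%N -> in_child m c true p -> in_child m c true q -> in_child m c false z ->
  ((nth pt0 s z).2%:~R : F) < line_at (nth pt0 s p) (nth pt0 s q) (nth pt0 s z).1%:~R.
Proof.
move=> s_sorted hs lt_mK lt_pq lt_q lt_z hp hq hz.
have lt_x := x_sorted_nth_lt s_sorted lt_pq ltac:(by rewrite (size_horton_rec hs)).
have /andP [high _] := horton_child_high_above c hs lt_mK.
have := horton_child_mem hs lt_mK (ltn_trans lt_pq lt_q) hp.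
have := horton_child_mem hs lt_mK lt_q hq; have := horton_child_mem hs lt_mK lt_z hz.
move=> /= z_in q_in p_in; rewrite line_at_gtE //.
move: high => /allP/(_ _ p_in)/allP/(_ _ q_in)/implyP/(_ lt_x)/allP/(_ _ z_in).
by rewrite line_at_gtE.
Qed.

Lemma horton_above_line {F : realFieldType} K s m c p q z :
  x_sorted s -> horton_rec K s -> (m < K)%N -> (p < q)%N -> (q < 2 ^ K)%N ->
  (z < 2 ^ K)%N -> in_child m c false p -> in_child m c false q -> in_child m c true z ->
  line_at (nth pt0 s p) (nth pt0 s q) ((nth pt0 s z).1%:~R : F) < (nth pt0 s z).2%:~R.
Proof.
move=> s_sorted hs lt_mK lt_pq lt_q lt_z hp hq hz.
have lt_x := x_sorted_nth_lt s_sorted lt_pq ltac:(by rewrite (size_horton_rec hs)).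
have /andP [_ high] := horton_child_high_above c hs lt_mK.
have := horton_child_mem hs lt_mK (ltn_trans lt_pq lt_q) hp.
have := horton_child_mem hs lt_mK lt_q hq; have := horton_child_mem hs lt_mK lt_z hz.
move=> /= z_in q_in p_in; rewrite line_at_ltE //.
move: high => /allP/(_ _ p_in)/allP/(_ _ q_in)/implyP/(_ lt_x)/allP/(_ _ z_in).
by rewrite line_at_ltE.
Qed.

Lemma affine_gt0_between (F : realFieldType) (f : F -> F) (k x1 x2 x : F) :
  (forall y z, f y - f z = k * (y - z)) -> 0 < f x1 -> 0 < f x2 ->
  x1 <= x <= x2 -> 0 < f x.
Proof.
move=> slope f1 f2 /andP [le1 le2]; case: (lerP 0 k) => [k_ge0|k_lt0].
  have : 0 <= k * (x - x1) by rewrite mulr_ge0 // subr_ge0.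
  by have := slope x x1; lra.
have : 0 <= k * (x - x2) by rewrite mulr_le0 ?subr_le0 // ltW.
by have := slope x x2; lra.
Qed.

Section SlabOrder.

Variables (F : realFieldType) (K : nat) (P : seq pt).
Hypotheses (P_sorted : x_sorted P) (P_horton : horton_rec K.+2 P).
Variables (m c r s : nat).
Hypotheses (m_le : (m <= K)%N) (r_lt : (r < 2 ^ K.+1)%N) (s_lt : (s < 2 ^ K.+1)%N).
Hypotheses (r_child : in_child m c false r) (s_child : in_child m c true s).

Let X z : F := (nth pt0 P z).1%:~R.
Let Y z : F := (nth pt0 P z).2%:~R.
Let Lr : F -> F := line_at (nth pt0 P r) (nth pt0 P (r + 2 ^ K.+1)).
Let Ls : F -> F := line_at (nth pt0 P s) (nth pt0 P (s + 2 ^ K.+1)).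
Let gap y := Ls y - Lr y.

Let pair_lt t : (t < 2 ^ K.+1)%N -> (t < t + 2 ^ K.+1 < 2 ^ K.+2)%N.
Proof.
move=> t_lt; rewrite -{1}[t]addn0 ltn_add2l expn_gt0 /=.
by rewrite (expnS 2 K.+1) mul2n -addnn ltn_add2r.
Qed.

Lemma gap_gt0_in_left_child z : (z < 2 ^ K.+2)%N -> in_child m c false z ->
  Lr (X z) <= Y z -> 0 < gap (X z).
Proof.
move=> z_lt z_child le_r; rewrite subr_gt0; apply: (le_lt_trans le_r).
have /andP [s_lt1 s_lt2] := pair_lt s_lt.
apply: (horton_below_line P_sorted P_horton _ s_lt1 s_lt2 z_lt s_child _ z_child).
  by rewrite ltnS ltnW.
by rewrite in_child_addn_pow2 // ltnS.
Qed.

Lemma gap_gt0_in_right_child z : (z < 2 ^ K.+2)%N -> in_child m c true z ->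
  Y z <= Ls (X z) -> 0 < gap (X z).
Proof.
move=> z_lt z_child le_s; rewrite subr_gt0; apply: (lt_le_trans _ le_s).
have /andP [r_lt1 r_lt2] := pair_lt r_lt.
apply: (horton_above_line P_sorted P_horton _ r_lt1 r_lt2 z_lt r_child _ z_child).
  by rewrite ltnS ltnW.
by rewrite in_child_addn_pow2 // ltnS.
Qed.

Lemma gap_gt0_left_of_slab : exists2 z, (z <= 2 ^ K)%N & 0 < gap (X z).
Proof.
have lt_KS : (2 ^ K < 2 ^ K.+1)%N by rewrite ltn_exp2l.
have lt_KSS : (2 ^ K.+1 < 2 ^ K.+2)%N by rewrite ltn_exp2l.
have [r_le | lt_r] := leqP r (2 ^ K).
  exists r => //; apply: gap_gt0_in_left_child r_child _; first exact: ltn_trans lt_KSS.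
  by rewrite /Lr line_at_fst.
have [s_le | lt_s] := leqP s (2 ^ K).
  exists s => //; apply: gap_gt0_in_right_child s_child _; first exact: ltn_trans lt_KSS.
  by rewrite /Ls line_at_fst.
have lt_mK : (m < K)%N.
  rewrite ltn_neqAle m_le andbT; apply: contraTneq r_child => ->; rewrite /in_child.
  have -> : (r %/ 2 ^ K = 1)%N.
    apply/eqP; rewrite eqn_leq -ltnS ltn_divLR ?leq_divRL ?expn_gt0 // mul1n.
    by rewrite -expnS r_lt ltnW.
  by rewrite /= andbF.
(* p_(s - n/4) lies in the right child at depth m, but in the left child of the
   depth-K vertex that contains the pair of s. *)
set z := (s - 2 ^ K)%N; have s_eq : s = (z + 2 ^ K)%N by rewrite subnK // ltnW.
have z_lt : (z < 2 ^ K)%N by rewrite -(ltn_add2r (2 ^ K)) -s_eq addnn -mul2n -expnS.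
exists z; first exact: ltnW.
apply: gap_gt0_in_right_child.
- by rewrite (ltn_trans z_lt) // (ltn_trans lt_KS).
- by rewrite -(in_child_addn_pow2 _ _ _ lt_mK) -s_eq.
have /andP [s_lt1 s_lt2] := pair_lt s_lt.
have z_child : in_child K z true s by rewrite s_eq in_child_addn_pow2_self in_child_small.
apply/ltW/(horton_below_line P_sorted P_horton _ s_lt1 s_lt2 _ z_child).
- by rewrite ltnW.
- by rewrite (ltn_trans z_lt) // (ltn_trans lt_KS).
- by rewrite in_child_addn_pow2.
- exact: in_child_small.
Qed.

Lemma gap_gt0_right_of_slab :
  exists2 z, (3 * 2 ^ K - 1 <= z < 2 ^ K.+2)%N & 0 < gap (X z).
Proof.
have /andP [r_lt1 r_lt2] := pair_lt r_lt; have /andP [s_lt1 s_lt2] := pair_lt s_lt.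
have sum_ge t : (2 ^ K - 1 <= t)%N -> (3 * 2 ^ K - 1 <= t + 2 ^ K.+1)%N.
  by rewrite expnS; lia.
have [r_ge | lt_r] := leqP (2 ^ K - 1) r.
  exists (r + 2 ^ K.+1)%N; first by rewrite sum_ge.
  apply: gap_gt0_in_left_child => //; first by rewrite in_child_addn_pow2 // ltnS.
  by rewrite /Lr line_at_snd // (x_sorted_nth_lt P_sorted r_lt1) // (size_horton_rec P_horton).
have [s_ge | lt_s] := leqP (2 ^ K - 1) s.
  exists (s + 2 ^ K.+1)%N; first by rewrite sum_ge.
  apply: gap_gt0_in_right_child => //; first by rewrite in_child_addn_pow2 // ltnS.
  by rewrite /Ls line_at_snd // (x_sorted_nth_lt P_sorted s_lt1) // (size_horton_rec P_horton).
have lt_r' : (r < 2 ^ K)%N by rewrite (leq_trans lt_r) // leq_subr.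
have lt_mK : (m < K)%N.
  rewrite ltn_neqAle m_le andbT; apply: contraTneq s_child => ->; rewrite /in_child.
  by rewrite divn_small ?andbF // (leq_trans lt_s) // leq_subr.
(* Symmetrically, p_(r + 3n/4) lies in the left child at depth m, but in the
   right child of the depth-K vertex that contains the pair of r. *)
set z := (r + 2 ^ K + 2 ^ K.+1)%N.
have z_lt : (z < 2 ^ K.+2)%N by rewrite /z !expnS; lia.
exists z; first by rewrite z_lt andbT /z sum_ge // (leq_trans (leq_subr 1 _)) // leq_addl.
apply: gap_gt0_in_left_child => //; first by rewrite !in_child_addn_pow2 // ltnS ltnW.
have z_child : in_child K r true z.
  by rewrite in_child_addn_pow2 // in_child_addn_pow2_self in_child_small.
apply/ltW/(horton_above_line P_sorted P_horton _ r_lt1 r_lt2 z_lt _ _ z_child).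
- by rewrite ltnW.
- exact: in_child_small.
- by rewrite in_child_addn_pow2 ?in_child_small.
Qed.

Lemma slab_lines_lt x : in_slab K.+2 P x -> Lr x < Ls x.
Proof.
have [zl zl_le gap_l] := gap_gt0_left_of_slab.
have [zr /andP [zr_ge zr_lt] gap_r] := gap_gt0_right_of_slab.
have size_P := size_horton_rec P_horton.
have quarter : (2 ^ K.+2 %/ 4 = 2 ^ K)%N by rewrite !expnS mulnA mulKn.
have three_quarters : ((3 * 2 ^ K.+2) %/ 4 = 3 * 2 ^ K)%N.
  by rewrite (_ : 3 * 2 ^ K.+2 = 4 * (3 * 2 ^ K))%N ?mulKn // !expnS; lia.
rewrite /in_slab quarter three_quarters => /andP [x_ge x_le]; rewrite -subr_gt0 -/(gap x).
apply: (@affine_gt0_between F gap _ (X zl) (X zr)) => //.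
  move=> y z; rewrite /gap [LHS](_ : _ = (Ls y - Ls z) - (Lr y - Lr z)); last by ring.
  by rewrite !line_at_slope -mulrBl.
by rewrite (le_trans _ x_ge) ?(le_trans x_le) //;
  apply: x_sorted_nth_le; rewrite // size_P ?ltn_exp2l.
Qed.

End SlabOrder.

Theorem lemma1 (k : nat) (P : seq pt) :
  (2 <= k)%N -> isothetic_horton k P ->
  let T1 := tree_level k.-1 P in
  (forall (F : realFieldType) (i j : nat), (i < size T1)%N -> (j < size T1)%N ->
     i != j -> forall x : F, in_slab k P x ->
     pair_line (nth [::] T1 i) x != pair_line (nth [::] T1 j) x)
  /\
  (forall (F : realFieldType) (i j : nat), (i < j)%N -> (j < size T1)%N ->
     forall x : F, in_slab k P x ->
     pair_line (nth [::] T1 i) x < pair_line (nth [::] T1 j) x).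
Proof.
case: k => [|[|K]] // _ /and3P [P_sorted _ P_horton] T1.
rewrite /T1 [K.+2.-1]/= size_tree_level {T1}.
have lines_lt (F : realFieldType) i j : (i < j)%N -> (j < 2 ^ K.+1)%N ->
    forall x : F, in_slab K.+2 P x ->
    pair_line (nth [::] (tree_level K.+1 P) i) x <
    pair_line (nth [::] (tree_level K.+1 P) j) x.
  move=> lt_ij lt_j x x_in; have lt_i := ltn_trans lt_ij lt_j.
  have [m [c [lt_mK r_child s_child]]] := bitrev_split lt_ij lt_j.
  rewrite /pair_line !nth_tree_level // !nth_tree_node ?bitrev_lt // !muln0 !addn0 !muln1.
  exact: (slab_lines_lt P_sorted P_horton lt_mK (bitrev_lt lt_i) (bitrev_lt lt_j)
           r_child s_child x_in).
split=> // F i j lt_i lt_j neq_ij x x_in.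
case: (ltngtP i j) neq_ij => // [lt_ij|lt_ji] _.
  by rewrite lt_eqF // lines_lt.
by rewrite gt_eqF // lines_lt.
Qed.
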